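(* Let $A\in\mathbb{C}^{n\times n}$ of rank $r>0$ and index $k$ be written in the Hartwig–Spindelböck decomposition $A=U\begin{bmatrix}\Sigma K&\Sigma L\\0&0\end{bmatrix}U^*$ (as in the context). Then: (a) if $m=1$, then $A^{\#_m}=A^{\mathrm{WC}}=U\begin{bmatrix}(\Sigma K)^{\mathrm{WG}}&0\\0&0\end{bmatrix}U^*$; (b) if $m\ge k$ (with $m\in\mathbb{N}=\{1,2,\dots\}$), then $A^{\#_m}=A^{\mathrm{cEP}}=U\begin{bmatrix}(\Sigma K)^{\mathrm{cEP}}&0\\0&0\end{bmatrix}U^*$.
   Context: Hartwig–Spindelböck decomposition: any $A\in\mathbb{C}^{n\times n}$ of rank $r>0$ can be written as $A=U\begin{bmatrix}\Sigma K&\Sigma L\\0&0\end{bmatrix}U^*$ with $U$ unitary, $\Sigma=\mathrm{diag}(\sigma_1I_{r_1},\dots,\sigma_sI_{r_s})$, $\sigma_1>\dots>\sigma_s>0$ the singular values of $A$, $r_1+\dots+r_s=r$, and $K\in\mathbb{C}^{r\times r}$, $L\in\mathbb{C}^{r\times(n-r)}$ with $KK^*+LL^*=I_r$. For a square matrix $B$: $B^\dagger$ Moore–Penrose inverse, $P_B=BB^\dagger$, $B^0=I$, $\mathcal{R}(\cdot)$ column space; $\mathrm{Ind}(B)$ is the smallest nonnegative integer $k$ with $\mathcal{R}(B^k)=\mathcal{R}(B^{k+1})$. The core-EP inverse $B^{\mathrm{cEP}}$ is the unique $X$ with $XBX=X$ and $\mathcal{R}(X)=\mathcal{R}(X^*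 )=\mathcal{R}(B^k)$, $k=\mathrm{Ind}(B)$. The WG inverse is $B^{\mathrm{WG}}:=(B^{\mathrm{cEP}})^2B$ and the WC inverse is $B^{\mathrm{WC}}:=B^{\mathrm{WG}}P_B$. For $m\in\mathbb{N}$, the $m$-weak group inverse is $B^{\mathrm{WG}_m}:=(B^{\mathrm{cEP}})^{m+1}B^m$ and the $m$-weak core inverse is $B^{\#_m}:=B^{\mathrm{WG}_m}P_{B^m}$. *)

(* Complex n x n matrices are modelled over an arbitrary
   numClosedFieldType C (e.g. the complex numbers); A^* is A ^t* (spectral.v). *)
From HB Require Import structures.
From mathcomp Require Import all_boot all_order all_algebra.
From mathcomp Require Export sesquilinear spectral.
From Stdlib Require Import ClassicalEpsilon.
Set Implicit Arguments. Unset Strict Implicit. Unset Printing Implicit Defensive.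
Import Order.TTheory GRing.Theory Num.Theory.
Local Open Scope ring_scope.
Local Open Scope sesquilinear_scope.

Section GenInv.
Variables (C : numClosedFieldType) (n : nat).
Implicit Types B X Y : 'M[C]_n.

Definition colspace_eq (p q : nat) (X : 'M[C]_(n, p)) (Y : 'M[C]_(n, q)) : Prop :=
  (X^T == Y^T)%MS.

Definition is_MP B X : Prop :=
  [/\ B *m X *m B = B, X *m B *m X = X,
      (B *m X)^t* = B *m X & (X *m B)^t* = X *m B].

Definition MP B : 'M[C]_n := epsilon (inhabits 0) (is_MP B).

Definition Pr B : 'M[C]_n := B *m MP B.

(* index: smallest k with R(B^k) = R(B^(k+1)); such k always exists in [0, n] *)
Definition ind B : nat :=
  find (fun k => ((B ^+ k)^T == (B ^+ k.+1)^T)%MS) (iota 0 n.+1).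

Definition is_cEP B X : Prop :=
  [/\ X *m B *m X = X, colspace_eq X (B ^+ ind B)
    & colspace_eq (X^t*) (B ^+ ind B)].

Definition cEP B : 'M[C]_n := epsilon (inhabits 0) (is_cEP B).

Definition WG B : 'M[C]_n := cEP B *m cEP B *m B.
Definition WC B : 'M[C]_n := WG B *m Pr B.

Definition WGm (m : nat) B : 'M[C]_n := (cEP B) ^+ m.+1 *m B ^+ m.
Definition WCm (m : nat) B : 'M[C]_n := WGm m B *m Pr (B ^+ m).

End GenInv.

From HB Require Import structures.
From mathcomp Require Import all_boot all_order all_algebra.
From mathcomp Require Import sesquilinear spectral.
From Stdlib Require Import ClassicalEpsilon.
Set Implicit Arguments. Unset Strict Implicit. Unset Printing Implicit Defensive.
Import Order.TTheory GRing.Theory Num.Theory.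
Local Open Scope ring_scope.
Local Open Scope sesquilinear_scope.

(** If the columns of F are an orthonormal basis of R(B^j) for some
    j >= Ind(B), then R(F) is B-invariant and B acts invertibly on it:
    B F = F M with M = F^* B F invertible, and B^cEP = F M^-1 F^*.
    Similarly P_B = F F^* when R(F) = R(B).  For m >= Ind(B) this gives
    B^#_m = F M^-(m+1) F^* B^m F F^* = F M^-(m+1) M^m F^* = B^cEP.
    Both formulas commute with unitary similarity, and for
    B = [T S; 0 0] with [T S] of full row rank R(B^(j+1)) = R([T^j; 0]), so
    F can be taken to be [F_T; 0]: B^cEP = diag(T^cEP, 0), P_B = diag(I, 0)
    and B^WC = diag(T^WG, 0).  In the Hartwig-Spindelboeck form
    [Sigma K, Sigma L] = Sigma [K, L] has full row rank since Sigma is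
    invertible and [K, L] is a co-isometry. *)

Section ConjTranspose.
Variable C : numClosedFieldType.

Lemma trmxC_mul m n p (X : 'M[C]_(m, n)) (Y : 'M[C]_(n, p)) :
  (X *m Y)^t* = Y^t* *m X^t*.
Proof. by rewrite trmx_mul map_mxM. Qed.

Lemma trmxC1 n : (1%:M : 'M[C]_n)^t* = 1%:M.
Proof. by rewrite trmx1 map_mx1. Qed.

Lemma trmxC_col_mx0 m1 m2 n (X : 'M[C]_(m1, n)) :
  (col_mx X (0 : 'M_(m2, n)))^t* = row_mx (X^t*) 0.
Proof. by rewrite tr_col_mx map_row_mx trmx0 map_mx0. Qed.

Lemma unitarymx_trmxC_mul n (U : 'M[C]_n) : U \is unitarymx -> U^t* *m U = 1%:M.
Proof. by move=> U_unitary; rewrite -[U^t*]mul1mx mulmxKtV. Qed.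

End ConjTranspose.

Section ColumnSpace.
Variables (C : numClosedFieldType) (n : nat).

Lemma colspace_eqP p q (X : 'M[C]_(n, p)) (Y : 'M[C]_(n, q)) :
  colspace_eq X Y <-> (exists D, X = Y *m D) /\ (exists E, Y = X *m E).
Proof.
have subP p' q' (X' : 'M[C]_(n, p')) (Y' : 'M[C]_(n, q')) :
    (X'^T <= Y'^T)%MS <-> exists D, X' = Y' *m D.
  split=> [/submxP[D defX] | [D ->]]; last by rewrite trmx_mul submxMl.
  by exists D^T; rewrite -[X']trmxK defX trmx_mul trmxK.
split; first by case/andP=> /subP ? /subP.
by case=> /subP ? /subP ?; apply/andP.
Qed.

Lemma colspace_eq_refl p (X : 'M[C]_(n, p)) : colspace_eq X X.
Proof. exact/eqmxP. Qed.

Lemma colspace_eq_sym p q (X : 'M[C]_(n, p)) (Y : 'M[C]_(n, q)) :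
  colspace_eq X Y -> colspace_eq Y X.
Proof. by move=> /eqmxP/eqmx_sym/eqmxP. Qed.

Lemma colspace_eq_trans p q o (X : 'M[C]_(n, p)) (Y : 'M[C]_(n, q))
    (Z : 'M[C]_(n, o)) :
  colspace_eq X Y -> colspace_eq Y Z -> colspace_eq X Z.
Proof. by move=> /eqmxP eqXY /eqmxP eqYZ; apply/eqmxP; apply: eqmx_trans eqYZ. Qed.

Lemma colspace_eq_mull m p q (W : 'M[C]_(m, n)) (X : 'M[C]_(n, p))
    (Y : 'M[C]_(n, q)) :
  colspace_eq X Y -> colspace_eq (W *m X) (W *m Y).
Proof. by move=> /eqmxP eqXY; apply/eqmxP; rewrite !trmx_mul; apply: eqmxMr. Qed.

Lemma colspace_eq_mulr_row_free p q (X : 'M[C]_(n, p)) (V : 'M[C]_(p, q)) :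
  row_free V -> colspace_eq (X *m V) X.
Proof.
move=> freeV; apply/eqmxP; rewrite trmx_mul; apply: eqmxMfull.
by rewrite /row_full mxrank_tr.
Qed.

End ColumnSpace.

Section Index.
Variables (C : numClosedFieldType) (n : nat).
Implicit Type B : 'M[C]_n.

Lemma exprSmx B j : B ^+ j.+1 = B *m B ^+ j.
Proof. exact: exprS. Qed.

Lemma exprSmxr B j : B ^+ j.+1 = B ^+ j *m B.
Proof. exact: exprSr. Qed.

Lemma has_colspace_eq_exprS B :
  has (fun k => ((B ^+ k)^T == (B ^+ k.+1)^T)%MS) (iota 0 n.+1).
Proof.
apply/negPn/negP => /hasPn no_stable.
suff rank_drop k : (k <= n.+1)%N -> (\rank (B ^+ k)^T + k <= n)%N.
  by have := rank_drop n.+1 (leqnn _); rewrite addnS ltnNge leq_addl.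
elim: k => [|k IHk] lt_k_Sn; first by rewrite trmx1 mxrank1 addn0.
have subS : ((B ^+ k.+1)^T <= (B ^+ k)^T)%MS by rewrite exprSr trmx_mul submxMl.
have rank_lt : (\rank (B ^+ k.+1)^T < \rank (B ^+ k)^T)%N.
  rewrite (ltn_leqif (mxrank_leqif_eq subS)) andbC.
  by apply: no_stable; rewrite mem_iota.
by rewrite addnS; apply: leq_trans (IHk (ltnW lt_k_Sn)); rewrite ltn_add2r.
Qed.

Lemma ind_le B : (ind B <= n)%N.
Proof. by have := has_colspace_eq_exprS B; rewrite has_find size_iota. Qed.

Lemma colspace_eq_expr_ind B : colspace_eq (B ^+ ind B) (B ^+ (ind B).+1).
Proof.
have := nth_find 0 (has_colspace_eq_exprS B).
by rewrite -/(ind B) nth_iota // ltnS ind_le.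
Qed.

Lemma colspace_eq_expr_stable B k j :
  colspace_eq (B ^+ k) (B ^+ k.+1) -> (k <= j)%N ->
  colspace_eq (B ^+ j) (B ^+ k).
Proof.
move=> stable_k; elim: j => [|j IHj].
  by rewrite leqn0 => /eqP->; apply: colspace_eq_refl.
rewrite leq_eqVlt => /predU1P[<- | le_k_j]; first exact: colspace_eq_refl.
apply: colspace_eq_trans (IHj le_k_j).
have := colspace_eq_mull (B ^+ (j - k)) stable_k.
rewrite !mulmxE -!exprD addnS subnK //.
exact: colspace_eq_sym.
Qed.

Lemma colspace_eq_expr_ind_stable B j :
  (ind B <= j)%N -> colspace_eq (B ^+ j) (B ^+ ind B).
Proof. exact/colspace_eq_expr_stable/colspace_eq_expr_ind. Qed.

Lemma expr_conj_unitary (U : 'M[C]_n) B j : U \is unitarymx ->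
  (U *m B *m U^t*) ^+ j = U *m B ^+ j *m U^t*.
Proof.
move=> U_unitary; elim: j => [|j IHj]; first by rewrite mulmx1 (unitarymxP _).
rewrite !exprSmx IHj !mulmxA -[U *m B *m U^t* *m U]mulmxA.
by rewrite unitarymx_trmxC_mul // mulmx1.
Qed.

End Index.

Lemma invmx_exprS_mul (C : numClosedFieldType) p (M : 'M[C]_p) j :
  M \in unitmx -> invmx M ^+ j.+1 *m M ^+ j = invmx M.
Proof.
move=> unitM; elim: j => [|j IHj]; first by rewrite expr1 mulmx1.
rewrite (exprSmxr (invmx M) j.+1) (exprSmx M j) mulmxA.
by rewrite -(mulmxA _ (invmx M) M) mulVmx // mulmx1 IHj.
Qed.

Section OrthonormalBasis.
Variables (C : numClosedFieldType) (n : nat).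

Lemma orthonormal_rowbasis p (B : 'M[C]_(p, n)) :
  exists q (H : 'M[C]_(q, n)), H \is unitarymx /\ (H :=: B)%MS.
Proof.
exists _, (schmidt (row_base B)); split.
  by apply: schmidt_unitarymx; apply: rank_leq_col.
by apply: eqmx_trans (eq_row_base B); apply: eqmx_schmidt_free; apply: row_base_free.
Qed.

Lemma orthonormal_colbasis p (B : 'M[C]_(n, p)) :
  exists q (F : 'M[C]_(n, q)), F^t* *m F = 1%:M /\ colspace_eq F B.
Proof.
have [q [H [/unitarymxP HH1 eqHB]]] := orthonormal_rowbasis B^T.
exists q, H^T; split; last by rewrite /colspace_eq trmxK; apply/eqmxP.
by have := congr1 trmx HH1; rewrite trmx_mul trmx1 map_trmx trmxK.
Qed.

End OrthonormalBasis.

Section MoorePenrose.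
Variables (C : numClosedFieldType) (n : nat).
Implicit Type B : 'M[C]_n.

Lemma orthonormal_factorization B :
  exists p (F : 'M[C]_(n, p)) (M : 'M[C]_p) (H : 'M[C]_(p, n)),
  [/\ F^t* *m F = 1%:M, H *m H^t* = 1%:M, M \in unitmx & B = F *m M *m H].
Proof.
have [p [F [FF1 eqFB]]] := orthonormal_colbasis B.
have [q [H [H_unitary eqHB]]] := orthonormal_rowbasis B.
have rankF : \rank F = p.
  by apply/eqP; rewrite eqn_leq rank_leq_col -{1}(mxrank1 C p) -FF1 mxrankM_maxr.
have rankFB : \rank F = \rank B.
  by rewrite -mxrank_tr -(mxrank_tr B); apply/eqmx_rank.
have eq_qp : q = p by rewrite -(mxrank_unitary H_unitary) eqHB -rankFB rankF.
subst q.
have defB_F : B = F *m (F^t* *m B).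
  by have /colspace_eqP[_ [D ->]] := eqFB; rewrite !mulmxA -(mulmxA F) FF1 mulmx1.
have defB_H : B = B *m H^t* *m H.
  have /submxP[E ->] : (B <= H)%MS by rewrite eqHB.
  by rewrite -(mulmxA E H) (unitarymxP H_unitary) mulmx1.
have defB : B = F *m (F^t* *m B *m H^t*) *m H.
  by rewrite !mulmxA -(mulmxA F) -defB_F -defB_H.
exists p, F, (F^t* *m B *m H^t*), H; split => //; first exact/unitarymxP.
rewrite -row_full_unit /row_full eqn_leq rank_leq_col -{1}rankF rankFB {1}defB.
exact: leq_trans (mxrankM_maxl _ _) (mxrankM_maxr _ _).
Qed.

Lemma MP_exists B : exists X, is_MP B X.
Proof.
have [p [F [M [H [FF1 HH1 unitM ->]]]]] := orthonormal_factorization B.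
have BX : F *m M *m H *m (H^t* *m invmx M *m F^t*) = F *m F^t*.
  by rewrite !mulmxA -(mulmxA _ H) HH1 mulmx1 (mulmxK unitM).
have XB : H^t* *m invmx M *m F^t* *m (F *m M *m H) = H^t* *m H.
  by rewrite !mulmxA -(mulmxA _ (F^t*)) FF1 mulmx1 (mulmxKV unitM).
exists (H^t* *m invmx M *m F^t*); split.
- by rewrite BX !mulmxA -(mulmxA F) FF1 mulmx1.
- by rewrite mulmxA XB !mulmxA -(mulmxA _ H) HH1 mulmx1.
- by rewrite BX trmxC_mul trmxCK.
- by rewrite XB trmxC_mul trmxCK.
Qed.

Lemma MP_spec B : is_MP B (MP B).
Proof. by apply: epsilon_spec; apply: MP_exists. Qed.

Lemma Pr_colbasis B p (F : 'M[C]_(n, p)) :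
  F^t* *m F = 1%:M -> colspace_eq F B -> Pr B = F *m F^t*.
Proof.
move=> FF1 /colspace_eqP[[E defF] [D defB]].
have [BXB _ BX_herm _] := MP_spec B.
have PF : Pr B *m F = F by rewrite /Pr {1}defF mulmxA BXB -defF.
have FP : F^t* *m Pr B = F^t* by rewrite /Pr -BX_herm -trmxC_mul PF.
have -> : Pr B = F *m F^t* *m Pr B.
  by rewrite /Pr defB !mulmxA -(mulmxA F (F^t*) F) FF1 mulmx1.
by rewrite -mulmxA FP.
Qed.

End MoorePenrose.

Section CoreEP.
Variables (C : numClosedFieldType) (n : nat) (B : 'M[C]_n).
Variables (p : nat) (F : 'M[C]_(n, p)).
Hypotheses (FF1 : F^t* *m F = 1%:M) (FB : colspace_eq F (B ^+ ind B)).

Local Notation M := (F^t* *m B *m F).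

Lemma mulmx_colbasis_ind : B *m F = F *m M.
Proof.
have /colspace_eqP[[D defF] [E defBk]] := FB.
have BF : B *m F = F *m (E *m B *m D).
  by rewrite {1}defF mulmxA -exprSmx exprSmxr defBk !mulmxA.
suff -> : M = E *m B *m D by [].
by rewrite -mulmxA BF mulmxA FF1 mul1mx.
Qed.

Lemma unit_colbasis_compression : M \in unitmx.
Proof.
have /colspace_eqP[[D defF] [E defBk]] := FB.
have /colspace_eqP[[Z defBk'] _] := colspace_eq_expr_ind B.
have FBF : F = B *m F *m (E *m Z *m D).
  by rewrite {1}defF defBk' exprSmx defBk !mulmxA.
have : M *m (E *m Z *m D) = 1%:M.
  by rewrite -FF1 [X in _ = _ *m X]FBF !mulmxA.
by case/mulmx1_unit.
Qed.

Lemma is_cEP_colbasis : is_cEP B (F *m invmx M *m F^t*).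
Proof.
have unitM := unit_colbasis_compression.
split.
- rewrite !mulmxA -(mulmxA _ B F) mulmx_colbasis_ind mulmxA.
  by rewrite -(mulmxA _ (F^t*) F) FF1 mulmx1 mulmxKV.
- apply: colspace_eq_trans FB; apply/colspace_eqP; split.
    by exists (invmx M *m F^t*); rewrite mulmxA.
  exists (F *m M).
  by rewrite mulmxA -(mulmxA _ (F^t*) F) FF1 mulmx1 mulmxKV.
- apply: colspace_eq_trans FB; apply/colspace_eqP.
  rewrite !trmxC_mul trmxCK mulmxA; split.
    by exists ((invmx M)^t* *m F^t*); rewrite mulmxA.
  exists (F *m M^t*).
  rewrite !mulmxA -(mulmxA _ (F^t*) F) FF1 mulmx1 -mulmxA -trmxC_mul.
  by rewrite mulmxV // trmxC1 mulmx1.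
Qed.

Lemma is_cEP_colbasis_uniq X : is_cEP B X -> X = F *m invmx M *m F^t*.
Proof.
have unitM := unit_colbasis_compression.
move=> [XBX XB XtB].
have /colspace_eqP[[D1 defX] [E defF]] := colspace_eq_trans XB (colspace_eq_sym FB).
have /colspace_eqP[[D2 defXt] _] := colspace_eq_trans XtB (colspace_eq_sym FB).
have FFX : F *m F^t* *m X = X by rewrite defX !mulmxA -(mulmxA F) FF1 mulmx1.
have XFF : X *m F *m F^t* = X.
  have -> : X = D2^t* *m F^t* by rewrite -[X]trmxCK defXt trmxC_mul.
  by rewrite -(mulmxA _ (F^t*) F) FF1 mulmx1.
pose Y := F^t* *m X *m F.
have defXY : X = F *m Y *m F^t* by rewrite /Y !mulmxA FFX XFF.
have XBF : X *m B *m F = F by rewrite [in LHS]defF mulmxA XBX -defF.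
have YM1 : Y *m M = 1%:M.
  transitivity (F^t* *m (X *m F *m F^t*) *m B *m F); first by rewrite /Y !mulmxA.
  by rewrite XFF -FF1 -[W in _ = _ *m W]XBF !mulmxA.
have YinvM : Y = invmx M.
  by rewrite -[Y]mulmx1 -(mulmxV unitM) mulmxA YM1 mul1mx.
by rewrite defXY YinvM.
Qed.

Lemma cEP_colbasis : cEP B = F *m invmx M *m F^t*.
Proof.
apply: is_cEP_colbasis_uniq; apply: epsilon_spec.
by exists (F *m invmx M *m F^t*); apply: is_cEP_colbasis.
Qed.

Lemma cEP_colbasis_expS j : cEP B ^+ j.+1 = F *m invmx M ^+ j.+1 *m F^t*.
Proof.
elim: j => [|j IHj]; first by rewrite !expr1 cEP_colbasis.
rewrite exprSmx IHj cEP_colbasis !mulmxA -(mulmxA _ (F^t*) F) FF1 mulmx1.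
by rewrite -(mulmxA F (invmx M)) -exprSmx.
Qed.

Lemma expr_mulmx_colbasis_ind j : B ^+ j *m F = F *m M ^+ j.
Proof.
elim: j => [|j IHj]; first by rewrite mulmx1 mul1mx.
rewrite exprSmxr -mulmxA mulmx_colbasis_ind mulmxA IHj -mulmxA.
by rewrite -exprSmxr.
Qed.

End CoreEP.

Lemma WCm_cEP (C : numClosedFieldType) n (B : 'M[C]_n) m :
  (ind B <= m)%N -> WCm m B = cEP B.
Proof.
move=> le_ind_m.
have [p [F [FF1 FB]]] := orthonormal_colbasis (B ^+ ind B).
have PrBm : Pr (B ^+ m) = F *m F^t*.
  apply: Pr_colbasis FF1 _; apply: colspace_eq_trans FB _.
  exact/colspace_eq_sym/colspace_eq_expr_ind_stable.
rewrite /WCm /WGm PrBm (cEP_colbasis_expS FF1 FB) (cEP_colbasis FF1 FB).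
rewrite mulmxA -(mulmxA _ (B ^+ m) F) (expr_mulmx_colbasis_ind FF1 FB) mulmxA.
rewrite -(mulmxA _ (F^t*) F) FF1 mulmx1 -(mulmxA F) invmx_exprS_mul //.
exact: unit_colbasis_compression.
Qed.

Section UnitaryConjugation.
Variables (C : numClosedFieldType) (n : nat) (U : 'M[C]_n).
Hypothesis U_unitary : U \is unitarymx.

Let UtU : U^t* *m U = 1%:M := unitarymx_trmxC_mul U_unitary.

Lemma orthonormal_mull p (F : 'M[C]_(n, p)) :
  F^t* *m F = 1%:M -> (U *m F)^t* *m (U *m F) = 1%:M.
Proof. by move=> FF1; rewrite trmxC_mul !mulmxA -(mulmxA _ (U^t*) U) UtU mulmx1. Qed.

Lemma colspace_eq_conj_unitary p (X : 'M[C]_(n, p)) (B : 'M[C]_n) :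
  colspace_eq X B -> colspace_eq (U *m X) (U *m B *m U^t*).
Proof.
move=> XB; apply: colspace_eq_trans (colspace_eq_mull U XB) _.
apply/colspace_eq_sym/colspace_eq_mulr_row_free.
by rewrite row_free_unit unitarymx_unit // trmxC_unitary.
Qed.

Lemma Pr_conj_unitary B : Pr (U *m B *m U^t*) = U *m Pr B *m U^t*.
Proof.
have [p [F [FF1 FB]]] := orthonormal_colbasis B.
rewrite (Pr_colbasis FF1 FB).
rewrite (Pr_colbasis (orthonormal_mull FF1) (colspace_eq_conj_unitary FB)).
by rewrite trmxC_mul !mulmxA.
Qed.

Lemma cEP_conj_unitary B : cEP (U *m B *m U^t*) = U *m cEP B *m U^t*.
Proof.
(* Using the n-th power avoids comparing the indices of B and U B U^t*. *)
have stable (B' : 'M[C]_n) : colspace_eq (B' ^+ n) (B' ^+ ind B').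
  exact/colspace_eq_expr_ind_stable/ind_le.
have [p [F [FF1 FB]]] := orthonormal_colbasis (B ^+ n).
have UFB := colspace_eq_conj_unitary FB.
rewrite -expr_conj_unitary // in UFB.
rewrite (cEP_colbasis FF1 (colspace_eq_trans FB (stable B))).
rewrite (cEP_colbasis (orthonormal_mull FF1) (colspace_eq_trans UFB (stable _))).
by rewrite trmxC_mul !mulmxA -!(mulmxA _ (U^t*) U) !UtU !mulmx1.
Qed.

Lemma WC_conj_unitary B : WC (U *m B *m U^t*) = U *m WC B *m U^t*.
Proof.
rewrite /WC /WG cEP_conj_unitary Pr_conj_unitary.
by rewrite !mulmxA -!(mulmxA _ (U^t*) U) !UtU !mulmx1.
Qed.

End UnitaryConjugation.

Section UpperBlock.
Variables (C : numClosedFieldType) (r s : nat) (T : 'M[C]_r) (S : 'M[C]_(r, s)).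
Hypothesis free_TS : row_free (row_mx T S).

Local Notation B := (block_mx T S 0 0 : 'M[C]_(r + s)).

Lemma colspace_eq_col_mx0 p q (X : 'M[C]_(r, p)) (Y : 'M[C]_(r, q)) :
  colspace_eq X Y -> colspace_eq (col_mx X (0 : 'M_(s, p))) (col_mx Y (0 : 'M_(s, q))).
Proof.
move/(colspace_eq_mull (col_mx 1%:M (0 : 'M_(s, r)))).
by rewrite !mul_col_mx !mul1mx !mul0mx.
Qed.

Lemma block_upper_exprS j : B ^+ j.+1 = col_mx (T ^+ j *m row_mx T S) 0.
Proof.
elim: j => [|j IHj]; first by rewrite expr1 mul1mx block_mxEv row_mx0.
by rewrite exprSmx IHj mul_block_col !mulmx0 !mul0mx !addr0 mulmxA -exprSmx.
Qed.

Lemma colspace_eq_block_upper_exprS j :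
  colspace_eq (B ^+ j.+1) (col_mx (T ^+ j) (0 : 'M_(s, r))).
Proof.
rewrite block_upper_exprS -[X in col_mx _ X](mul0mx _ (row_mx T S)) -mul_col_mx.
exact: colspace_eq_mulr_row_free.
Qed.

Lemma Pr_block_upper : Pr B = block_mx 1%:M 0 0 0.
Proof.
have FF1 : (col_mx 1%:M (0 : 'M_(s, r)))^t* *m col_mx 1%:M 0 = 1%:M :> 'M[C]_r.
  by rewrite trmxC_col_mx0 trmxC1 mul_row_col mulmx0 addr0 mulmx1.
have FB := colspace_eq_sym (colspace_eq_block_upper_exprS 0).
rewrite expr1 expr0 in FB.
rewrite (Pr_colbasis FF1 FB) trmxC_col_mx0 trmxC1 mul_col_row.
by rewrite !(mulmx1, mulmx0, mul0mx).
Qed.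

Lemma cEP_block_upper : cEP B = block_mx (cEP T) 0 0 0.
Proof.
have [p [FT [FF1 FT_T]]] := orthonormal_colbasis (T ^+ ind T).
have F_FF1 : (col_mx FT (0 : 'M_(s, p)))^t* *m col_mx FT 0 = 1%:M.
  by rewrite trmxC_col_mx0 mul_row_col mulmx0 addr0.
have FB : colspace_eq (col_mx FT (0 : 'M_(s, p))) (B ^+ ind B).
  have le_ind_T : (ind T <= r + s)%N := leq_trans (ind_le T) (leq_addr s r).
  have le_ind_B : (ind B <= (r + s).+1)%N := leqW (ind_le B).
  apply: colspace_eq_trans (colspace_eq_expr_ind_stable le_ind_B).
  apply: colspace_eq_trans (colspace_eq_sym (colspace_eq_block_upper_exprS _)).
  apply: colspace_eq_col_mx0.
  exact: colspace_eq_trans FT_T (colspace_eq_sym (colspace_eq_expr_ind_stable le_ind_T)).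
rewrite (cEP_colbasis F_FF1 FB) (cEP_colbasis FF1 FT_T) trmxC_col_mx0.
rewrite mul_row_block mul_row_col !mulmx0 !addr0 mul_col_mx mul0mx mul_col_row.
by rewrite !(mulmx0, mul0mx).
Qed.

Lemma WC_block_upper : WC B = block_mx (WG T) 0 0 0.
Proof.
rewrite /WC /WG cEP_block_upper Pr_block_upper !mulmx_block.
by rewrite !(mulmx0, mul0mx, addr0, mulmx1).
Qed.

End UpperBlock.

Lemma row_mx_unitarymx (C : numClosedFieldType) r s (K : 'M[C]_r) (L : 'M[C]_(r, s)) :
  K *m K^t* + L *m L^t* = 1%:M -> row_mx K L \is unitarymx.
Proof.
by move=> KKLL1; apply/unitarymxP; rewrite tr_row_mx map_col_mx mul_row_col.
Qed.

Lemma row_free_unit_mul (C : numClosedFieldType) m n (D : 'M[C]_m) (X : 'M[C]_(m, n)) :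
  D \in unitmx -> X \is unitarymx -> row_free (D *m X).
Proof.
move=> unitD /unitarymxP XX1; apply/row_freeP; exists (X^t* *m invmx D).
by rewrite mulmxA -(mulmxA D) XX1 mulmx1 mulmxV.
Qed.

Theorem corollary6p2 (C : numClosedFieldType) (r s : nat)
    (A U : 'M[C]_(r + s)) (d : 'rV[C]_r) (K : 'M[C]_r) (L : 'M[C]_(r, s)) :
  (0 < r)%N ->
  \rank A = r ->
  U \is unitarymx ->
  (forall i : 'I_r, 0 < d 0 i) ->
  (forall i j : 'I_r, (i <= j)%N -> d 0 j <= d 0 i) ->
  (forall i : 'I_r, eigenvalue (A *m A^t*) (d 0 i ^+ 2)) ->
  (forall x : C, x != 0 -> eigenvalue (A *m A^t*) x ->
     exists i : 'I_r, x = d 0 i ^+ 2) ->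
  K *m K^t* + L *m L^t* = 1%:M ->
  A = U *m block_mx (diag_mx d *m K) (diag_mx d *m L) 0 0 *m U^t* ->
  (WCm 1 A = WC A /\
   WC A = U *m block_mx (WG (diag_mx d *m K)) 0 0 0 *m U^t*) /\
  (forall m : nat, (0 < m)%N -> (ind A <= m)%N ->
     WCm m A = cEP A /\
     cEP A = U *m block_mx (cEP (diag_mx d *m K)) 0 0 0 *m U^t*).
Proof.
(* The ordering of d and its identification with the singular values of A
   are not needed: only the invertibility of diag_mx d and the co-isometry
   condition on [K, L] are used. *)
move=> _ _ U_unitary d_gt0 _ _ _ KKLL1 ->.
have unit_diag : diag_mx d \in unitmx.
  rewrite unitmxE det_diag unitfE; apply/prodf_neq0 => i _; exact: lt0r_neq0.
have free_TS : row_free (row_mx (diag_mx d *m K) (diag_mx d *m L)).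
  by rewrite -mul_mx_row; apply: row_free_unit_mul unit_diag (row_mx_unitarymx KKLL1).
split.
  split; first by rewrite /WCm /WGm /WC /WG expr1 expr2.
  by rewrite WC_conj_unitary // WC_block_upper.
by move=> m _ le_ind_m; rewrite WCm_cEP // cEP_conj_unitary // cEP_block_upper.
Qed.
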